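(* For every positive integer $k$, there exist a finite simple undirected graph $G$ and an orientation $\vec{G}$ of $G$ such that $k\geq \operatorname{adim}(G)\geq\operatorname{bdim}(G)$ and $\operatorname{adim}(\vec{G})\geq\operatorname{bdim}(\vec{G})\geq 2^k$.
   Context: An orientation of $G$ is a directed graph obtained by assigning a direction to each edge of $G$. In an undirected graph, $d(u,v)$ is the shortest-path distance; in a directed graph, $d(u,v)$ is the length of a shortest directed path from $u$ to $v$; in both cases $d(u,v)=\infty$ if no such path exists. For a nonnegative integer $k$, $d_k(u,v)=\min(d(u,v),k+1)$. A function $f:V\to\mathbb{Z}_{\geq 0}$ is a resolving broadcast if for any distinct vertices $x,y$ there is $z$ with $f(z)>0$ and $d_{f(z)}(z,x)\neq d_{f(z)}(z,y)$. The broadcast dimension $\operatorname{bdim}$ is the minimum of $\sum_v f(v)$ over resolving broadcasts $f$. A set $A$ of vertices is an adjacency resolving set if for any distinct $x,y$ there is $z\in A$ with $d_1(z,x)\neq d_1(z,y)$; the adjacency dimension $\operatorname{adim}$ is the minimum cardinality of such a set. *)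

From mathcomp Require Import all_boot.
Set Implicit Arguments. Unset Strict Implicit. Unset Printing Implicit Defensive.

(* A (di)graph on a finite vertex type T is given by an adjacency relation r:
   r u v means there is an edge (arc) from u to v. *)

Definition simple_graph (T : finType) (e : rel T) : Prop :=
  symmetric e /\ irreflexive e.

Definition orientation (T : finType) (e o : rel T) : Prop :=
  (forall u v, o u v -> e u v) /\
  (forall u v, e u v -> (o u v && ~~ o v u) || (o v u && ~~ o u v)).

Fixpoint within (T : finType) (r : rel T) (n : nat) (u : T) : {set T} :=
  match n with
  | 0 => [set u]
  | m.+1 => within r m u :|: [set y | [exists x in within r m u, r x y]]
  end.

(* d(u,v): Some n = length of a shortest (directed) path, None = infinity.
   Shortest paths have length < #|T|, so searching 0..#|T|-1 suffices. *)
Definition dist (T : finType) (r : rel T) (u v : T) : option nat :=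
  let n := find (fun m => v \in within r m u) (iota 0 #|T|) in
  if n < #|T| then Some n else None.

Definition dtrunc (T : finType) (r : rel T) (k : nat) (u v : T) : nat :=
  match dist r u v with
  | Some d => minn d k.+1
  | None => k.+1
  end.

Definition resolving_broadcast (T : finType) (r : rel T) (f : T -> nat) : Prop :=
  forall x y : T, x != y ->
    exists z : T, 0 < f z /\ dtrunc r (f z) z x != dtrunc r (f z) z y.

Definition is_bdim (T : finType) (r : rel T) (b : nat) : Prop :=
  (exists f : T -> nat, resolving_broadcast r f /\ \sum_(v : T) f v = b) /\
  (forall f : T -> nat, resolving_broadcast r f -> b <= \sum_(v : T) f v).

Definition adjacency_resolving (T : finType) (r : rel T) (A : {set T}) : Prop :=
  forall x y : T, x != y ->
    exists2 z, z \in A & dtrunc r 1 z x != dtrunc r 1 z y.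

Definition is_adim (T : finType) (r : rel T) (a : nat) : Prop :=
  (exists A : {set T}, adjacency_resolving r A /\ #|A| = a) /\
  (forall A : {set T}, adjacency_resolving r A -> a <= #|A|).

From mathcomp Require Import all_boot.
From Stdlib Require Import Wf_nat Classical.

Set Implicit Arguments.
Unset Strict Implicit.
Unset Printing Implicit Defensive.

(* Take as vertices the k elements of I = {0, ..., k-1} and the 2^k subsets of I,
   an element j being adjacent to a subset X exactly when j \in X: the element
   vertices then form an adjacency resolving set of size k.  The graph is oriented
   so that the in-neighbourhood of a vertex depends only on its level in I (an
   element is its own level, a subset has its maximum as level).  Two vertices of
   the same level are at the same distance from every third vertex, so a resolving
   broadcast vanishes on at most one vertex per level, whence bdim >= 2^k. *)

Lemma exists_least_nat (P : nat -> Prop) :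
  (exists n, P n) -> exists n, P n /\ forall m, P m -> n <= m.
Proof.
move=> exP; have [n [[Pn minn] _]] :=
  dec_inh_nat_subset_has_unique_least_element P (fun m => classic (P m)) exP.
by exists n; split=> // m /minn /leP.
Qed.

Section Resolving.
Variables (T : finType) (r : rel T).

Lemma dtrunc1 (z x : T) :
  dtrunc r 1 z x = if x == z then 0 else if r z x then 1 else 2.
Proof.
have within1 : (x \in within r 1 z) = (x == z) || r z x.
  rewrite /= !inE; congr (_ || _); apply/existsP/idP => [[y]|rzx].
    by rewrite inE => /andP[/eqP-> ].
  by exists z; rewrite inE eqxx.
rewrite /dtrunc /dist; case: eqP => [->|/eqP x_neq_z].
  have := max_card (mem [set z]); rewrite cards1.
  by case: #|T| => //= m _; rewrite inE eqxx.
have : 1 < #|T| by have := max_card (mem [set x; z]); rewrite cards2 x_neq_z.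
case: #|T| => [|[|m]] //= _; rewrite inE (negbTE x_neq_z) within1 (negbTE x_neq_z) /=.
by case: (r z x) => //=; case: ifP.
Qed.

Lemma self_dtrunc1_separates (x y : T) : x != y -> dtrunc r 1 x x != dtrunc r 1 x y.
Proof.
by move=> x_neq_y; rewrite !dtrunc1 eqxx (eq_sym y) (negbTE x_neq_y); case: (r x y).
Qed.

Lemma adim_exists : exists a, is_adim r a.
Proof.
have [|a [[A [resA <-]] minA]] :=
  @exists_least_nat (fun a => exists A, adjacency_resolving r A /\ #|A| = a).
  by exists #|[set: T]|, [set: T]; split=> // x y /self_dtrunc1_separates; exists x.
by exists #|A|; split=> [|B resB]; [exists A | apply: minA; exists B].
Qed.

Lemma bdim_exists : exists b, is_bdim r b.
Proof.
have [|b [[f [resf <-]] minf]] :=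
  @exists_least_nat (fun b => exists f, resolving_broadcast r f /\ \sum_(v : T) f v = b).
  by exists #|T|, (fun=> 1); rewrite sum1_card; split=> // x y /self_dtrunc1_separates; exists x.
by exists (\sum_(v : T) f v); split=> [|g resg]; [exists f | apply: minf; exists g].
Qed.

Lemma adjacency_resolving_broadcast (A : {set T}) :
  adjacency_resolving r A -> resolving_broadcast r (fun v => v \in A).
Proof. by move=> resA x y /resA[z zA sep_z]; exists z; rewrite zA. Qed.

Lemma bdim_le_adim a b : is_adim r a -> is_bdim r b -> b <= a.
Proof.
move=> [[A [/adjacency_resolving_broadcast resA <-]] _] [_ minb].
by rewrite -sum1_card big_mkcond; apply: leq_trans (minb _ resA) _.
Qed.

Definition in_twins (x y : T) : Prop := forall w, w != x -> w != y -> r w x = r w y.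

Lemma in_twins_within (x y z : T) : z != x -> z != y -> in_twins x y ->
  forall m, (x \in within r m z) = (y \in within r m z).
Proof.
move=> z_neq_x z_neq_y twin_xy; elim=> [|m IHm] /=.
  by rewrite !inE !(eq_sym _ z) (negbTE z_neq_x) (negbTE z_neq_y).
rewrite !inE IHm; case yW: (y \in within r m z) => //=.
have xW : (x \in within r m z) = false by rewrite IHm yW.
have outside w : w \in within r m z -> (w != x) && (w != y).
  by move=> wW; apply/andP; split; apply: contraTneq wW => ->; rewrite ?xW ?yW.
apply/existsP/existsP => -[w /andP[wW rw]]; exists w; rewrite wW /=;
  have /andP[w_neq_x w_neq_y] := outside w wW.
  by rewrite -twin_xy.
by rewrite twin_xy.
Qed.

Lemma in_twins_dist (x y z : T) : z != x -> z != y -> in_twins x y -> dist r z x = dist r z y.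
Proof.
move=> z_neq_x z_neq_y /(in_twins_within z_neq_x z_neq_y) eq_within.
by rewrite /dist (eq_find (a2 := fun m => y \in within r m z)).
Qed.

Lemma resolving_broadcast_twin_classes (S : finType) (cls : T -> S) (f : T -> nat) :
  (forall x y, cls x = cls y -> in_twins x y) -> resolving_broadcast r f ->
  #|T| <= #|S| + \sum_(v : T) f v.
Proof.
move=> twins resf; pose Z := [set v | f v == 0].
have cls_inj : {in Z &, injective cls}.
  move=> x y; rewrite !inE => /eqP fx0 /eqP fy0 cls_xy; apply/eqP/negPn/negP.
  move=> /resf[z [fz_gt0]]; apply/negP/negPn.
  have z_neq v : f v = 0 -> z != v by move=> fv0; apply: contraTneq fz_gt0 => ->; rewrite fv0.
  by rewrite /dtrunc (in_twins_dist (z_neq x fx0) (z_neq y fy0) (twins x y cls_xy)).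
have card_Z : #|Z| <= #|S| by rewrite -(card_in_imset cls_inj) max_card.
have card_notZ : #|~: Z| <= \sum_(v : T) f v.
  by rewrite -sum1_card big_mkcond leq_sum // => v _; rewrite !inE; case: (f v).
by rewrite -(cardsC Z) leq_add.
Qed.

Definition underlying_graph (o : rel T) : rel T := fun u v => o u v || o v u.

Lemma asymmetric_orientation (o : rel T) : (forall u v, o u v -> ~~ o v u) ->
  simple_graph (underlying_graph o) /\ orientation (underlying_graph o) o.
Proof.
move=> o_asym; split; split.
- by move=> u v; apply: orbC.
- move=> v; rewrite /underlying_graph orbb; apply/negP => ovv.
  by have := o_asym v v ovv; rewrite ovv.
- by move=> u v ouv; rewrite /underlying_graph ouv.
- by move=> u v /orP[ouv|ovu]; rewrite ?ouv ?ovu ?(o_asym _ _ ouv) ?(o_asym _ _ ovu) ?orbT.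
Qed.

End Resolving.

Section Construction.
Variable n : nat.
Local Notation k := n.+1.

Definition vertex := ('I_k + {set 'I_k})%type.

Definition top_elem (X : {set 'I_k}) : 'I_k := inord (\max_(j in X) j).

Lemma top_elemE (X : {set 'I_k}) : top_elem X = \max_(j in X) j :> nat.
Proof. by rewrite inordK // ltnS; apply/bigmax_leqP => j _; rewrite -ltnS. Qed.

Lemma top_elem_max (X : {set 'I_k}) (j : 'I_k) : j \in X -> j <= top_elem X.
Proof. by move=> jX; rewrite top_elemE (leq_bigmax_cond _ jX). Qed.

Lemma top_elem_in (X : {set 'I_k}) : top_elem X != ord0 -> top_elem X \in X.
Proof.
have [->|] := eqVneq X set0.
  by rewrite -val_eqE /= top_elemE big_set0.
rewrite -card_gt0 => X_gt0 _; have [i iX max_i] := @eq_bigmax_cond _ (mem X) val X_gt0.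
suff -> : top_elem X = i by [].
by apply/val_inj; rewrite /= top_elemE.
Qed.

Lemma top_elem_eq0 (X : {set 'I_k}) : top_elem X = ord0 -> X \subset [set ord0].
Proof.
move=> top0; apply/subsetP => j jX; rewrite inE -val_eqE /= -leqn0.
by have := top_elem_max jX; rewrite top0.
Qed.

Definition level (v : vertex) : 'I_k :=
  match v with inl j => j | inr X => top_elem X end.

(* The root of level c sends an arc to every other vertex of level c, and a subset
   X sends an arc to every vertex whose level lies in X below its own; an edge j--X
   is thus a root arc when j is the maximum of X and an arc X -> j otherwise.  The
   root of level 0 is the subset {0}, since level 0 contains the empty set, which is
   adjacent to no element. *)
Definition root (c : 'I_k) : vertex := if c == ord0 then inr [set ord0] else inl c.

Definition arc (u v : vertex) : bool :=
  (u != v) &&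
  ((u == root (level v)) ||
   if u is inr X then (level v \in X) && (level v < level u) else false).

Lemma level_root c : level (root c) = c.
Proof.
rewrite /root; case: eqP => [->|//] /=.
by apply/val_inj; rewrite /= top_elemE big_set1.
Qed.

Definition rank (v : vertex) : nat := (level v).*2 + (v == root (level v)).

Lemma arc_rank u v : arc u v -> rank v < rank u.
Proof.
case/andP=> u_neq_v /orP[/eqP u_root|].
  rewrite /rank u_root level_root eqxx -u_root eq_sym (negbTE u_neq_v).
  by rewrite addn0 addn1.
case: u u_neq_v => // X _ /andP[_ lt_level].
apply: leq_trans (leq_addr _ _); apply: leq_ltn_trans (_ : _ <= (level v).*2.+1) _.
  by rewrite -addn1 leq_add2l leq_b1.
by rewrite -doubleS leq_double.
Qed.

Lemma arc_asym u v : arc u v -> ~~ arc v u.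
Proof.
move=> /arc_rank lt_vu; apply/negP=> /arc_rank lt_uv.
by have := ltn_trans lt_uv lt_vu; rewrite ltnn.
Qed.

Lemma level_in_twins x y : level x = level y -> in_twins arc x y.
Proof. by move=> eq_level w w_neq_x w_neq_y; rewrite /arc eq_level w_neq_x w_neq_y. Qed.

Lemma inl_eq_root j c : (inl j == root c) = (c != ord0) && (j == c).
Proof. by rewrite /root; case: (c == ord0). Qed.

Lemma inr_eq_root X c : (inr X == root c) = (c == ord0) && (X == [set ord0]).
Proof. by rewrite /root; case: (c == ord0). Qed.

Lemma edge_inl_inr j X : underlying_graph arc (inl j) (inr X) = (j \in X).
Proof.
rewrite /underlying_graph /arc /= inl_eq_root inr_eq_root orbF.
apply/idP/idP => [|jX].
  case/orP=> [/andP[top_neq0 /eqP->]|/orP[/andP[/eqP-> /eqP->]|/andP[]//]].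
    exact: top_elem_in.
  by rewrite set11.
have := top_elem_max jX; rewrite leq_eqVlt => /orP[/eqP/val_inj j_top|j_lt].
  have [j0|j_neq0] := eqVneq j ord0; last by rewrite -j_top j_neq0 (eqxx j).
  by rewrite /= eqEsubset top_elem_eq0 -?j_top // sub1set -j0 jX orbT.
by rewrite jX j_lt !orbT.
Qed.

Lemma dtrunc1_inl_inr j X :
  dtrunc (underlying_graph arc) 1 (inl j) (inr X) = if j \in X then 1 else 2.
Proof. by rewrite dtrunc1 edge_inl_inr. Qed.

Lemma inl_adjacency_resolving :
  adjacency_resolving (underlying_graph arc) [set inl j | j : 'I_k].
Proof.
have inl_in (j : 'I_k) : (inl j : vertex) \in [set inl i | i : 'I_k] by apply: imset_f.
move=> [i|X] y x_neq_y.
  by exists (inl i); last apply: self_dtrunc1_separates.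
case: y x_neq_y => [i|Y] x_neq_y.
  by exists (inl i); rewrite // eq_sym; apply: self_dtrunc1_separates; rewrite eq_sym.
have [j sep_j] : exists j, (j \in X) != (j \in Y).
  apply/existsP; apply: contraNT x_neq_y => /existsPn same.
  by apply/eqP; congr inr; apply/setP => j; apply/eqP/negPn/same.
by exists (inl j); rewrite // !dtrunc1_inl_inr; move: sep_j; do 2!case: (_ \in _).
Qed.

Lemma card_vertex : #|{: vertex}| = k + 2 ^ k.
Proof. by rewrite card_sum card_ord -cardsT -powersetT card_powerset cardsT card_ord. Qed.

End Construction.

Theorem theorem5p3 (k : nat) (hk : 0 < k) :
  exists (T : finType) (e o : rel T),
    simple_graph e /\ orientation e o /\
    exists aG bG aD bD : nat,
      is_adim e aG /\ is_bdim e bG /\ is_adim o aD /\ is_bdim o bD /\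
      k >= aG /\ aG >= bG /\ aD >= bD /\ bD >= 2 ^ k.
Proof.
case: k hk => // n _.
have [simple_e orient_o] := asymmetric_orientation (@arc_asym n).
exists (vertex n), (underlying_graph (@arc n)), (@arc n); do 2!split=> //.
have [aG adim_e] := adim_exists (underlying_graph (@arc n)).
have [bG bdim_e] := bdim_exists (underlying_graph (@arc n)).
have [aD adim_o] := adim_exists (@arc n).
have [bD bdim_o] := bdim_exists (@arc n).
exists aG, bG, aD, bD; do 4!split=> //.
split.
  have [_ /(_ _ (@inl_adjacency_resolving n))] := adim_e.
  by rewrite card_imset ?card_ord //; apply: inl_inj.
split; first exact: bdim_le_adim adim_e bdim_e.
split; first exact: bdim_le_adim adim_o bdim_o.
have [[f [resf <-]] _] := bdim_o.
have := resolving_broadcast_twin_classes (@level_in_twins n) resf.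
by rewrite card_vertex card_ord leq_add2l.
Qed.
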